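(* For every formula $\varphi\in\mathcal{L}^{\Box}$ (i.e. not containing $\mathrel{\Diamond\!\!\to}$), $\varphi$ is derivable in $\mathsf{ConstCK}$ if and only if $\varphi$ is derivable in $\mathsf{ConstCK}^{\Box}$.
   Context: Language $\mathcal{L}$: formulas $\varphi ::= p \mid \bot \mid \varphi\wedge\varphi \mid \varphi\vee\varphi \mid \varphi\to\varphi \mid \varphi \mathrel{\Box\!\!\to} \varphi \mid \varphi \mathrel{\Diamond\!\!\to}\varphi$; $\mathcal{L}^\Box$ is the fragment without $\mathrel{\Diamond\!\!\to}$. $\neg\varphi:=\varphi\to\bot$, $\top:=\neg\bot$, $\varphi\leftrightarrow\psi:=(\varphi\to\psi)\wedge(\psi\to\varphi)$. Axioms/rules: CM$_\Box$: $(\varphi\mathrel{\Box\!\!\to}\psi\wedge\chi)\to(\varphi\mathrel{\Box\!\!\to}\psi)\wedge(\varphi\mathrel{\Box\!\!\to}\chi)$; CC$_\Box$: $(\varphi\mathrel{\Box\!\!\to}\psi)\wedge(\varphi\mathrel{\Box\!\!\to}\chi)\to(\varphi\mathrel{\Box\!\!\to}\psi\wedge\chi)$; CN$_\Box$: $\varphi\mathrel{\Box\!\!\to}\top$; CN$_\Diamond$: $\neg(\varphi\mathrel{\Diamond\!\!\to}\bot)$; CK$_\Diamond$: $(\varphi\mathrel{\Box\!\!\to}(\psi\to\chi))\to((\varphi\mathrel{\Diamond\!\!\to}\psi)\to(\varphi\mathrel{\Diamond\!\!\to}\chi))$; RA$_\Box$: from $\varphi\leftrightarrow\rho$ infer $(\varphi\mathrel{\Box\!\!\to}\psi)\leftrightarrow(\rho\mathrel{\Box\!\!\to}\psi)$;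 RC$_\Box$: from $\psi\leftrightarrow\chi$ infer $(\varphi\mathrel{\Box\!\!\to}\psi)\leftrightarrow(\varphi\mathrel{\Box\!\!\to}\chi)$; RA$_\Diamond$, RC$_\Diamond$: the same with $\mathrel{\Diamond\!\!\to}$. $\mathsf{ConstCK}^\Box$: in language $\mathcal{L}^\Box$, any axiomatisation of intuitionistic propositional logic with modus ponens plus RA$_\Box$, RC$_\Box$, CM$_\Box$, CC$_\Box$, CN$_\Box$. $\mathsf{ConstCK}$: in language $\mathcal{L}$, intuitionistic propositional logic with modus ponens plus CM$_\Box$, CC$_\Box$, CN$_\Box$, CN$_\Diamond$, CK$_\Diamond$, RA$_\Box$, RC$_\Box$, RA$_\Diamond$, RC$_\Diamond$. *)

Inductive form : Type :=
| Var : nat -> form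
| Bot : form
| And : form -> form -> form
| Or  : form -> form -> form
| Imp : form -> form -> form
| BoxArr : form -> form -> form
| DiaArr : form -> form -> form.

Definition Neg (p : form) : form := Imp p Bot.
Definition Top : form := Neg Bot.
Definition Iff (p q : form) : form := And (Imp p q) (Imp q p).

Fixpoint dfree (p : form) : bool :=
  match p with
  | Var _ | Bot => true
  | And a b | Or a b | Imp a b | BoxArr a b => andb (dfree a) (dfree b)
  | DiaArr _ _ => false
  end.

Inductive ipc_ax : form -> Prop :=
| IK  : forall a b, ipc_ax (Imp a (Imp b a))
| IS  : forall a b c,
    ipc_ax (Imp (Imp a (Imp b c)) (Imp (Imp a b) (Imp a c)))
| IAE1 : forall a b, ipc_ax (Imp (And a b) a)
| IAE2 : forall a b, ipc_ax (Imp (And a b) b)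
| IAI  : forall a b, ipc_ax (Imp a (Imp b (And a b)))
| IOI1 : forall a b, ipc_ax (Imp a (Or a b))
| IOI2 : forall a b, ipc_ax (Imp b (Or a b))
| IOE  : forall a b c,
    ipc_ax (Imp (Imp a c) (Imp (Imp b c) (Imp (Or a b) c)))
| IEFQ : forall a, ipc_ax (Imp Bot a).

Inductive box_ax : form -> Prop :=
| CMbox : forall p q r,
    box_ax (Imp (BoxArr p (And q r)) (And (BoxArr p q) (BoxArr p r)))
| CCbox : forall p q r,
    box_ax (Imp (And (BoxArr p q) (BoxArr p r)) (BoxArr p (And q r)))
| CNbox : forall p, box_ax (BoxArr p Top).

Inductive dia_ax : form -> Prop :=
| CNdia : forall p, dia_ax (Neg (DiaArr p Bot))
| CKdia : forall p q r,
    dia_ax (Imp (BoxArr p (Imp q r)) (Imp (DiaArr p q) (DiaArr p r))).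

Inductive ConstCKBox : form -> Prop :=
| CB_ipc : forall p, ipc_ax p -> dfree p = true -> ConstCKBox p
| CB_box : forall p, box_ax p -> dfree p = true -> ConstCKBox p
| CB_mp  : forall p q, ConstCKBox p -> ConstCKBox (Imp p q) -> ConstCKBox q
| CB_RA  : forall p r q, ConstCKBox (Iff p r) -> dfree q = true ->
    ConstCKBox (Iff (BoxArr p q) (BoxArr r q))
| CB_RC  : forall p q r, ConstCKBox (Iff q r) -> dfree p = true ->
    ConstCKBox (Iff (BoxArr p q) (BoxArr p r)).

Inductive ConstCK : form -> Prop :=
| C_ipc : forall p, ipc_ax p -> ConstCK p
| C_box : forall p, box_ax p -> ConstCK p
| C_dia : forall p, dia_ax p -> ConstCK p
| C_mp  : forall p q, ConstCK p -> ConstCK (Imp p q) -> ConstCK q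
| C_RAbox : forall p r q, ConstCK (Iff p r) ->
    ConstCK (Iff (BoxArr p q) (BoxArr r q))
| C_RCbox : forall p q r, ConstCK (Iff q r) ->
    ConstCK (Iff (BoxArr p q) (BoxArr p r))
| C_RAdia : forall p r q, ConstCK (Iff p r) ->
    ConstCK (Iff (DiaArr p q) (DiaArr r q))
| C_RCdia : forall p q r, ConstCK (Iff q r) ->
    ConstCK (Iff (DiaArr p q) (DiaArr p r)).


(* Reading every [phi <>-> psi] as [Bot] is the identity on L^Box and turns
   each diamond axiom into [Top] or a weakening of it, and each instance of
   RA/RC for [<>->] into [Iff Bot Bot]; all other axioms and rules are
   mapped to instances of themselves.  Hence every ConstCK-theorem is sent to
   a ConstCK^Box-theorem, which is the nontrivial direction; conversely
   ConstCK^Box is literally a subsystem of ConstCK. *)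

Fixpoint erase_dia (p : form) : form :=
  match p with
  | Var n => Var n
  | Bot => Bot
  | And a b => And (erase_dia a) (erase_dia b)
  | Or a b => Or (erase_dia a) (erase_dia b)
  | Imp a b => Imp (erase_dia a) (erase_dia b)
  | BoxArr a b => BoxArr (erase_dia a) (erase_dia b)
  | DiaArr _ _ => Bot
  end.

Lemma erase_dia_dfree (p : form) : dfree (erase_dia p) = true.
Proof. induction p; simpl; rewrite ?IHp1, ?IHp2; reflexivity. Qed.

Lemma erase_dia_id (p : form) : dfree p = true -> erase_dia p = p.
Proof.
  induction p; simpl; intros Hp; try reflexivity; try discriminate;
    apply andb_prop in Hp as [Hp1 Hp2]; rewrite IHp1, IHp2; auto.
Qed.

Lemma ipc_ax_erase_dia (p : form) : ipc_ax p -> ipc_ax (erase_dia p).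
Proof. intros H; destruct H; constructor. Qed.

Lemma box_ax_erase_dia (p : form) : box_ax p -> box_ax (erase_dia p).
Proof. intros H; destruct H; constructor. Qed.

Lemma ConstCKBox_dfree (p : form) : ConstCKBox p -> dfree p = true.
Proof.
  intros H; induction H as [| | p q _ _ _ IHpq | p r q _ IH Hq | p q r _ IH Hp];
    simpl in *; auto.
  - apply andb_prop in IHpq as [_ Hq]; exact Hq.
  - apply andb_prop in IH as [IH _]; apply andb_prop in IH as [-> ->].
    rewrite Hq; reflexivity.
  - apply andb_prop in IH as [IH _]; apply andb_prop in IH as [-> ->].
    rewrite Hp; reflexivity.
Qed.

Lemma ConstCKBox_Top : ConstCKBox Top.
Proof. apply CB_ipc; [constructor | reflexivity]. Qed.

Lemma ConstCKBox_weaken (p q : form) :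
  dfree p = true -> ConstCKBox q -> ConstCKBox (Imp p q).
Proof.
  intros Hp Hq.
  apply (CB_mp q); [exact Hq |].
  apply CB_ipc; [constructor |].
  simpl; rewrite Hp, (ConstCKBox_dfree q Hq); reflexivity.
Qed.

Lemma ConstCKBox_and (p q : form) :
  ConstCKBox p -> ConstCKBox q -> ConstCKBox (And p q).
Proof.
  intros Hp Hq.
  apply (CB_mp q); [exact Hq |].
  apply (CB_mp p); [exact Hp |].
  apply CB_ipc; [constructor |].
  simpl; rewrite (ConstCKBox_dfree p Hp), (ConstCKBox_dfree q Hq).
  reflexivity.
Qed.

Lemma ConstCKBox_Iff_Bot : ConstCKBox (Iff Bot Bot).
Proof. apply ConstCKBox_and; exact ConstCKBox_Top. Qed.

Lemma ConstCKBox_erase_dia (p : form) : ConstCK p -> ConstCKBox (erase_dia p).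
Proof.
  intros H; induction H as [p Hax | p Hax | p Hax | p q _ IHp _ IHpq
                           | p r q _ IH | p q r _ IH | | ]; simpl in *.
  - apply CB_ipc; [apply ipc_ax_erase_dia; exact Hax | apply erase_dia_dfree].
  - apply CB_box; [apply box_ax_erase_dia; exact Hax | apply erase_dia_dfree].
  - destruct Hax as [p | p q r]; simpl.
    + exact ConstCKBox_Top.
    + apply ConstCKBox_weaken; [simpl; rewrite !erase_dia_dfree; reflexivity |].
      exact ConstCKBox_Top.
  - exact (CB_mp _ _ IHp IHpq).
  - apply CB_RA; [exact IH | apply erase_dia_dfree].
  - apply CB_RC; [exact IH | apply erase_dia_dfree].
  - exact ConstCKBox_Iff_Bot.
  - exact ConstCKBox_Iff_Bot.
Qed.

Lemma ConstCKBox_ConstCK (p : form) : ConstCKBox p -> ConstCK p.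
Proof.
  intros H; induction H.
  - apply C_ipc; assumption.
  - apply C_box; assumption.
  - apply (C_mp p); assumption.
  - apply C_RAbox; assumption.
  - apply C_RCbox; assumption.
Qed.

Theorem theorem6 : forall phi : form, dfree phi = true ->
  (ConstCK phi <-> ConstCKBox phi).
Proof.
  intros phi Hphi; split; intros H.
  - rewrite <- (erase_dia_id phi Hphi).
    apply ConstCKBox_erase_dia; exact H.
  - apply ConstCKBox_ConstCK; exact H.
Qed.
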